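(* Let $M=p_i^{n_i}p_j^{n_j}p_k^{n_k}$ with distinct primes and $n_i,n_j,n_k\in\mathbb{N}$, let $A\oplus B=\mathbb{Z}_M$ with $\Phi_M(X)\mid A(X)$, assume $A$ is fibered on $D$-grids where $D=M/(p_ip_jp_k)$, and let $\Lambda=\Lambda(z_0,D)$ for some $z_0\in\mathbb{Z}_M$. Let $z_\nu=z_0+\nu M/p_k$ for $\nu=0,\dots,p_k-1$. Assume that $\kappa(a)\in\{i,j\}$ for all $a\in\Sigma_A(\Lambda)$, and that for each $\nu$ there is $\lambda(\nu)\in\{i,j\}$ with $\kappa(a)=\lambda(\nu)$ for all $a\in\Sigma_A(z_\nu*F_i*F_j)$. Assume further that for each $\lambda\in\{i,j\}$, $$\#\{\nu\in\{0,1,\dots,p_k-1\}:\lambda(\nu)=\lambda\}\ge2.$$ Then all fibers $z*F_k$ with $z\in\Lambda$ split with the same parity: either all with parity $(A,B)$ or all with parity $(B,A)$.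
   Context: $A\oplus B=\mathbb{Z}_M$ means every element of $\mathbb{Z}_M$ is uniquely $a+b$, $a\in A$, $b\in B$; $A(X)=\sum_{a\in A}X^a$ ($A$ in $\{0,\dots,M-1\}$), $\Phi_M$ the $M$-th cyclotomic polynomial. For $d\mid M$, $\Lambda(x,d)=\{x'\in\mathbb{Z}_M:d\mid x-x'\}$. For $\nu\in\{i,j,k\}$, $F_\nu=\{0,M/p_\nu,\dots,(p_\nu-1)M/p_\nu\}$; $x*Y=\{x+y:y\in Y\}$, $X*Y=\{x+y:x\in X,y\in Y\}$. A set $Y$ is fibered in the $p_\nu$ direction if it is a union of sets $y*F_\nu$, $y\in Y$. ''$A$ is fibered on $D$-grids'' means for every $a\in A$, $A\cap\Lambda(a,D)$ is fibered in some direction $p_\nu$. The function $\kappa:A\to\{i,j,k\}$: for each $D$-grid $\Lambda(x,D)$ meeting $A$, fix one direction $\nu(x)$ in which $A\cap\Lambda(x,D)$ is fibered (chosen arbitrarily if several) and set $\kappa(a)=\nu(x)$ for $a\in A\cap\Lambda(x,D)$. For $Z\subset\mathbb{Z}_M$, $\Sigma_A(Z)=\{a\in A:a+b\in Z\text{ for some }b\in B\}$, $\Sigma_B(Z)=\{b\in B:a+b\in Z\text{ for some }a\in A\}$. A fiber $Z=z*F_k$ splits with parity $(A,B)$ if $p_k^{n_k}\mid a-a'$ for all $a,a'\in\Sigma_A(Z)$ and, for distinct $b,b'\in\Sigma_B(Z)$, $p_k^{n_k-1}\mid b-b'$ but $p_k^{n_k}\nmid b-b'$; parity $(B,A)$ is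 defined with $A,B$ interchanged. *)

From HB Require Import structures.
From mathcomp Require Import all_boot all_order all_algebra all_field.
Set Implicit Arguments. Unset Strict Implicit. Unset Printing Implicit Defensive.
Import GRing.Theory.
Local Open Scope ring_scope.

Inductive dir := Di | Dj | Dk.
Definition dir_eqb (x y : dir) : bool :=
  match x, y with Di, Di | Dj, Dj | Dk, Dk => true | _, _ => false end.
Lemma dir_eqP : Equality.axiom dir_eqb.
Proof. by case; case; constructor. Qed.
HB.instance Definition _ := hasDecEq.Build dir dir_eqP.

Definition pof (pi pj pk : nat) (d : dir) : nat :=
  match d with Di => pi | Dj => pj | Dk => pk end.

(* Z_M is 'Z_M (we always have M >= 2 below). *)

Definition tiling (M : nat) (A B : {set 'Z_M}) : Prop :=
  (forall x : 'Z_M, exists a, exists b, [/\ a \in A, b \in B & a + b = x]) /\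
  (forall a b a' b' : 'Z_M, a \in A -> b \in B -> a' \in A -> b' \in B ->
     a + b = a' + b' -> a = a' /\ b = b').

Definition maskpoly (M : nat) (A : {set 'Z_M}) : {poly int} :=
  \sum_(a in A) 'X^(nat_of_ord a).

Definition grid (M : nat) (x : 'Z_M) (d : nat) : {set 'Z_M} :=
  [set x' : 'Z_M | (d %| nat_of_ord (x - x')%R)%N].

Definition fib (M p : nat) : {set 'Z_M} :=
  [set ((t * (M %/ p))%N%:R : 'Z_M) | t : 'I_p].

Definition shift (M : nat) (x : 'Z_M) (Y : {set 'Z_M}) : {set 'Z_M} :=
  [set x + y | y in Y].

Definition sumset (M : nat) (X Y : {set 'Z_M}) : {set 'Z_M} :=
  [set x + y | x in X, y in Y].

Definition fibered (M : nat) (Y : {set 'Z_M}) (p : nat) : Prop :=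
  Y = \bigcup_(y in Y) shift y (fib M p).

(* Sigma_X(Z) relative to the tiling partner Y: {x in X : x + y in Z for some y in Y}.
   Sigma_A(Z) = Sigma A B Z, Sigma_B(Z) = Sigma B A Z. *)
Definition Sigma (M : nat) (X Y Z : {set 'Z_M}) : {set 'Z_M} :=
  [set x in X | [exists y in Y, x + y \in Z]].

Definition splits_parity (M : nat) (X Y Z : {set 'Z_M}) (p n : nat) : Prop :=
  (forall x x', x \in Sigma X Y Z -> x' \in Sigma X Y Z ->
     (p ^ n %| nat_of_ord (x - x')%R)%N) /\
  (forall y y', y \in Sigma Y X Z -> y' \in Sigma Y X Z -> y != y' ->
     (p ^ n.-1 %| nat_of_ord (y - y')%R)%N /\ ~~ (p ^ n %| nat_of_ord (y - y')%R)%N).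

(* By Tijdeman's theorem, r A (+) B = Z_M for every r coprime to M.  Hence, if
   a + b and a' + b' (a, a' in A, b, b' in B) lie on a common fiber in the p_k
   direction, then p_k^n_k divides a' - a or b' - b: otherwise some s makes
   (s+1)(a' - a) + (b' - b) = 0 with s + 1 either coprime to M, which contradicts
   the uniqueness of (s+1) a + b, or divisible by p_k, which forces p_k^n_k to
   divide b' - b.  So on each fiber z * F_k either all A-components or all
   B-components are congruent mod p_k^n_k (the parities (A, B) and (B, A)), and
   never both.
   Two distinct points z + t M/p_k of a fiber with lambda(t) = i have A-components
   a with A fibered in direction p_i near a; translating the fiber by M/p_i thus
   translates both A-components, which preserves their congruence and hence the
   parity.  As i and j each occur twice among the lambda(t), the parity of
   z_0 * F_k propagates in the i and j directions, and trivially in the k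
   direction, to every fiber in Lambda(z_0, D).  Only the tiling, the fibering
   of A in the directions kappa, the choice of lambda and the count of lambda
   are used. *)

From HB Require Import structures.
From mathcomp Require Import all_boot all_order all_algebra all_field.
From mathcomp Require Import ring zify.
From Stdlib Require Import Classical.
Set Implicit Arguments.
Unset Strict Implicit.
Unset Printing Implicit Defensive.
Import GRing.Theory.
Local Open Scope ring_scope.

Section Tiling.
Variable m : nat.
Implicit Types (X Y : {set 'Z_m}) (x e : 'Z_m).

Lemma tiling_sym X Y : tiling X Y -> tiling Y X.
Proof.
move=> [ex un]; split=> [x | b a b' a' hb ha hb' ha' e].
  by have [a [b [ha hb <-]]] := ex x; exists b, a; rewrite addrC.
by have [] := un a b a' b' ha hb ha' hb'; rewrite // addrC e addrC.
Qed.

Lemma tiling_rep1 X Y x :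
  tiling X Y -> #|[set u in setX X Y | u.1 + u.2 == x]| = 1%N.
Proof.
move=> [ex un]; have [a [b [ha hb e]]] := ex x.
apply/eqP/cards1P; exists (a, b); apply/setP => -[a' b']; rewrite !inE /= xpair_eqE.
apply/idP/idP => [/andP [/andP [ha' hb'] /eqP e'] | /andP [/eqP -> /eqP ->]].
  by have [-> ->] := un _ _ _ _ ha' hb' ha hb (etrans e' (esym e)); rewrite !eqxx.
by rewrite ha hb e eqxx.
Qed.

Lemma tiling_imset_of_rep1 (f : 'Z_m -> 'Z_m) X Y :
  (forall x, #|[set u in setX X Y | f u.1 + u.2 == x]| = 1%N) ->
  tiling [set f a | a in X] Y.
Proof.
move=> rep1; split=> [x | _ b _ b' /imsetP [a ha ->] hb /imsetP [a' ha' ->] hb' e].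
  have /eqP/cards1P [[a b] /setP /(_ (a, b))] := rep1 x.
  rewrite !inE /= eqxx => /andP [/andP [ha hb] /eqP <-].
  by exists (f a), b; split=> //; apply: imset_f.
have /eqP/cards1P [u /setP hu] := rep1 (f a + b).
have /(_ (a, b)) := hu; have /(_ (a', b')) := hu.
rewrite !inE /= ha ha' hb hb' e eqxx /=.
by move=> /esym/eqP <- /esym/eqP [-> ->].
Qed.

Lemma sum_card_rep (f : 'Z_m -> 'Z_m) X Y :
  (\sum_(x : 'Z_m) #|[set u in setX X Y | (f u.1 + u.2)%R == x]|)%N = (#|X| * #|Y|)%N.
Proof.
rewrite -cardsX -sum1_card (partition_big (fun u => f u.1 + u.2) xpredT) //=.
by apply: eq_bigr => x _; rewrite -sum1_card; apply: eq_bigl => u; rewrite !inE.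
Qed.

Hypothesis m_gt1 : (1 < m)%N.

Lemma card_tiling X Y : tiling X Y -> (#|X| * #|Y|)%N = m.
Proof.
move=> hT; rewrite -(sum_card_rep id) (eq_bigr (fun=> 1%N)) => [|x _].
  by rewrite sum1_card card_ord Zp_cast.
exact: tiling_rep1.
Qed.

Definition tile_proj X Y x : 'Z_m :=
  odflt 0 [pick a in X | [exists b in Y, a + b == x]].

Lemma tile_projP X Y x : tiling X Y ->
  tile_proj X Y x \in X /\ x - tile_proj X Y x \in Y.
Proof.
move=> [ex _]; rewrite /tile_proj; case: pickP => [a /andP [ha] | none] /=.
  by case/existsP=> b /andP [hb /eqP <-]; rewrite addrC addKr.
have [a [b [ha hb e]]] := ex x.
by have := none a; rewrite ha /= => /negbT/existsPn/(_ b); rewrite hb e eqxx.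
Qed.

Lemma tile_proj_addr X Y a b : tiling X Y -> a \in X -> b \in Y ->
  tile_proj X Y (a + b) = a.
Proof.
move=> hT ha hb; have [hp hq] := tile_projP (a + b) hT.
by have [] := hT.2 _ _ _ _ hp hq ha hb (etrans (addrC _ _) (subrK _ _)).
Qed.

Lemma tile_proj_sym X Y x : tiling X Y -> tile_proj Y X x = x - tile_proj X Y x.
Proof.
move=> hT; have [hp hq] := tile_projP x hT.
by rewrite -{1}[x](subrK (tile_proj X Y x)) tile_proj_addr //; apply: tiling_sym.
Qed.

Lemma tile_proj_shift X Y x e : tiling X Y -> tile_proj X Y x + e \in X ->
  tile_proj X Y (x + e) = tile_proj X Y x + e.
Proof.
move=> hT he; have [_ hq] := tile_projP x hT.
by rewrite -{1}[x](subrK (tile_proj X Y x)) -addrA addrC tile_proj_addr.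
Qed.

End Tiling.

Lemma all_eq1_of_pos_sum (T : finType) (N : T -> nat) :
  (forall x, 0 < N x)%N -> (\sum_x N x)%N = #|T| -> forall x, N x = 1%N.
Proof.
move=> pos sumN; have /eqP : (\sum_x (N x - 1) = 0)%N.
  by rewrite sumnB // sumN sum1_card subnn.
rewrite sum_nat_eq0 => /forallP eq0 x.
by have := eq0 x; rewrite implyTb subn_eq0 => le1; apply/eqP; rewrite eqn_leq le1 pos.
Qed.

Section Tijdeman.
Variables (m p : nat).
Hypotheses (m_gt1 : (1 < m)%N) (p_pr : prime p).
Implicit Types (X Y : {set 'Z_m}) (y : 'Z_m).
Local Notation n := (Zp_trunc m).+2.

(* Permutation matrices of the translations of Z_m: their sums compute in the
   group algebra F_p[Z_m]. *)
Definition transl_mx y : 'M['F_p]_n := \matrix_(i, j) (j == i + y)%:R.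

Lemma transl_mxD y z : transl_mx y * transl_mx z = transl_mx (y + z).
Proof.
apply/matrixP => i j; rewrite !mxE (bigD1 (i + y)) //= !mxE eqxx mul1r addrA.
by rewrite big1 ?addr0 // => k /negPf ne_k; rewrite !mxE ne_k mul0r.
Qed.

Lemma transl_mxX y k : transl_mx y ^+ k = transl_mx (y *+ k).
Proof.
elim: k => [|k IHk]; last by rewrite exprS IHk transl_mxD mulrS.
by apply/matrixP => i j; rewrite !mxE addr0 eq_sym.
Qed.

Lemma sum_transl_mx_expp (I : Type) (r : seq I) (P : pred I) (F : I -> 'Z_m) :
  (\sum_(a <- r | P a) transl_mx (F a)) ^+ p = \sum_(a <- r | P a) transl_mx (F a *+ p).
Proof.
have pchar_p : p \in [pchar 'M['F_p]_n] by rewrite (pchar_lalg 'M['F_p]_n) pchar_Fp.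
elim: r => [|x r IHr]; first by rewrite !big_nil expr0n gtn_eqF ?prime_gt0.
rewrite !big_cons; case: (P x) => //.
rewrite -(pFrobenius_autE pchar_p) pFrobenius_autD_comm; last first.
  by apply: commr_sum => a _; rewrite /GRing.comm !transl_mxD addrC.
by rewrite !pFrobenius_autE IHr transl_mxX.
Qed.

Lemma transl_mx_ones y : transl_mx y * const_mx 1 = const_mx 1.
Proof.
apply/matrixP => i j; rewrite !mxE (bigD1 (i + y)) //= !mxE eqxx mul1r.
by rewrite big1 ?addr0 // => k /negPf ne_k; rewrite !mxE ne_k mul0r.
Qed.

Lemma sum_transl_mx_entry (S : {set 'Z_m * 'Z_m}) (F : 'Z_m * 'Z_m -> 'Z_m) i j :
  (\sum_(u in S) transl_mx (F u)) i j = #|[set u in S | F u == j - i]|%:R.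
Proof.
rewrite summxE -sum1_card natr_sum big_mkcond [RHS]big_mkcond /=.
apply: eq_bigr => u _; rewrite mxE inE [F u == _]eq_sym subr_eq addrC.
by case: (u \in S); case: (j == _).
Qed.

Lemma sum_transl_mxM (f : 'Z_m -> 'Z_m) X Y :
  (\sum_(a in X) transl_mx (f a)) * (\sum_(b in Y) transl_mx b) =
  \sum_(u in setX X Y) transl_mx (f u.1 + u.2).
Proof.
rewrite mulr_suml; under eq_bigr do rewrite mulr_sumr.
rewrite pair_big; apply: eq_big => [u | u _]; last exact: transl_mxD.
by rewrite inE.
Qed.

(* In F_p[Z_m], (sum X)^p (sum Y) = (sum X)^(p-1) J = |X|^(p-1) J and
   (sum X)^p = sum (p X), so each x has |X|^(p-1) <> 0 (mod p) representations
   x = p a + b; as there are |X| |Y| = m of them in total, each x has one. *)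
Lemma tiling_scale_prime X Y : tiling X Y -> ~~ (p %| #|X|)%N ->
  tiling [set a *+ p | a in X] Y.
Proof.
move=> hT pNX; apply: tiling_imset_of_rep1.
pose N (x : 'Z_m) := #|[set u in setX X Y | u.1 *+ p + u.2 == x]|.
pose SX := \sum_(a in X) transl_mx a; pose SY := \sum_(b in Y) transl_mx b.
pose J : 'M['F_p]_n := const_mx 1.
have SXY : SX * SY = J.
  apply/matrixP => i j; rewrite (sum_transl_mxM id) sum_transl_mx_entry mxE.
  by rewrite tiling_rep1.
have SXJ k : SX ^+ k * J = J *+ (#|X| ^ k).
  elim: k => [|k IHk]; first by rewrite mul1r.
  rewrite exprSr -mulrA mulr_suml (eq_bigr _ (fun a _ => transl_mx_ones a)).
  by rewrite sumr_const mulrnAr IHk -mulrnA expnSr.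
have N_pos x : (0 < N x)%N.
  have := congr1 (fun S : 'M['F_p]_n => S 0 x) (sum_transl_mxM (fun a => a *+ p) X Y).
  rewrite -sum_transl_mx_expp -/SX -/SY.
  rewrite -[X in SX ^+ X](prednK (prime_gt0 p_pr)) exprSr -mulrA SXY SXJ.
  rewrite sum_transl_mx_entry subr0 mulmxnE mxE => eqN.
  rewrite lt0n; apply: contra pNX => /eqP N0.
  have : (p %| #|X| ^ p.-1)%N by rewrite (dvdn_pcharf (pchar_Fp p_pr)) eqN -/(N x) N0.
  by rewrite Euclid_dvdX // => /andP [].
apply: (all_eq1_of_pos_sum N_pos).
by rewrite (sum_card_rep (fun a => a *+ p)) card_tiling // card_ord Zp_cast.
Qed.

End Tijdeman.

Section TijdemanScale.
Variable m : nat.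
Hypothesis m_gt1 : (1 < m)%N.
Implicit Types (X Y : {set 'Z_m}).

Lemma tiling_scale X Y r : tiling X Y -> coprime r m ->
  tiling [set a *+ r | a in X] Y.
Proof.
move=> hT; elim/ltn_ind: r => r IHr co_rm.
have [r_le1 | r_gt1] := leqP r 1.
  case: r r_le1 co_rm {IHr} => [_ | [_ _ | //]]; first by rewrite /coprime gcd0n gtn_eqF.
  by rewrite (eq_imset _ (mulr1n (V:=_))) imset_id.
have q_pr := pdiv_prime r_gt1; have q_dvd := pdiv_dvd r.
set q := pdiv r in q_pr q_dvd *.
have lt_rq : (r %/ q < r)%N by rewrite ltn_Pdiv ?prime_gt1 // ltnW.
have hTq := IHr _ lt_rq (coprime_dvdl (dvdn_div q_dvd) co_rm).
have qNX : ~~ (q %| #|[set a *+ (r %/ q) | a in X]|)%N.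
  apply: contraL co_rm => q_dvdX; rewrite /coprime; apply/negP => /eqP co.
  have : (q %| gcdn r m)%N by rewrite dvdn_gcd q_dvd -(card_tiling m_gt1 hTq) dvdn_mulr.
  by rewrite co dvdn1 => /eqP q1; rewrite q1 in q_pr.
have := tiling_scale_prime m_gt1 q_pr hTq qNX; rewrite -imset_comp.
by under eq_imset do rewrite /= -mulrnA divnK //.
Qed.

Lemma tiling_scaled_eq X Y r a a' b b' : tiling X Y -> coprime r m ->
  a \in X -> a' \in X -> b \in Y -> b' \in Y ->
  a *+ r + b = a' *+ r + b' -> a = a'.
Proof.
move=> hT co_rm ha ha' hb hb' e.
have ha_r : a *+ r \in [set x *+ r | x in X] by apply: imset_f.
have ha'_r : a' *+ r \in [set x *+ r | x in X] by apply: imset_f.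
have [ar_eq _] := (tiling_scale hT co_rm).2 _ _ _ _ ha_r hb ha'_r hb' e.
have r_unit : (r%:R : 'Z_m) \is a GRing.unit by rewrite unitZpE // coprime_sym.
by rewrite -(mulrK r_unit a) -(mulrK r_unit a') !mulr_natr ar_eq.
Qed.

End TijdemanScale.

Section ZpDvdn.
Variable M : nat.
Hypothesis M_gt1 : (1 < M)%N.

Lemma Zp_natN k : - (k%:R : 'Z_M) = (k * M.-1)%N%:R.
Proof.
apply/eqP; rewrite eq_sym -subr_eq0 opprK -natrD -{2}[k]muln1 -mulnDr.
by rewrite addn1 prednK ?(ltnW M_gt1) // natrM pchar_Zp // mulr0.
Qed.

Lemma Zp_nat_gcdn m n : (0 < m)%N ->
  exists x y, ((gcdn m n)%:R : 'Z_M) = (x * m + y * n)%N%:R.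
Proof.
move=> m_gt0; have [km kn def_km _] := egcdnP n m_gt0.
exists km, (kn * M.-1)%N.
by rewrite natrD def_km natrD mulnAC -Zp_natN addrAC subrr add0r.
Qed.

Variable d : nat.
Hypothesis d_dvdM : (d %| M)%N.

Lemma dvdn_Zp_nat k : (d %| (k%:R : 'Z_M))%N = (d %| k)%N.
Proof. by rewrite val_Zp_nat // {2}(divn_eq k M) dvdn_addr // dvdn_mull. Qed.

Lemma dvdn_Zp_addl (x y : 'Z_M) : (d %| x)%N -> (d %| (x + y)%R)%N = (d %| y)%N.
Proof.
by move=> d_x; rewrite -[x]natr_Zp -[y]natr_Zp -natrD dvdn_Zp_nat dvdn_addr // natr_Zp.
Qed.

Lemma dvdn_Zp_opp (x : 'Z_M) : (d %| (- x)%R)%N = (d %| x)%N.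
Proof.
apply/idP/idP => [d_x | d_x]; last by rewrite -(dvdn_Zp_addl (- x) d_x) addrN dvdn0.
by rewrite -(dvdn_Zp_addl x d_x) addNr dvdn0.
Qed.

End ZpDvdn.

Section Fibers.
Variables (M p : nat).
Hypotheses (M_gt1 : (1 < M)%N) (p_gt0 : (0 < p)%N) (p_dvdM : (p %| M)%N).

Lemma fibP (x : 'Z_M) :
  x \in fib M p -> exists2 t, (t < p)%N & x = (t * (M %/ p))%N%:R.
Proof. by case/imsetP => t _ ->; exists t. Qed.

Lemma fib_natmul c : ((c * (M %/ p))%N%:R : 'Z_M) \in fib M p.
Proof.
apply/imsetP; exists (Ordinal (ltn_pmod c p_gt0)) => //=.
rewrite {1}(divn_eq c p) mulnDl natrD -mulnA [(p * _)%N]mulnC divnK // natrM.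
by rewrite pchar_Zp // mulr0 add0r.
Qed.

Lemma fib_add (f g : 'Z_M) : f \in fib M p -> g \in fib M p -> f + g \in fib M p.
Proof. by move=> /fibP [s _ ->] /fibP [t _ ->]; rewrite -natrD -mulnDl fib_natmul. Qed.

Lemma fibered_add (Y : {set 'Z_M}) y f :
  fibered Y p -> y \in Y -> f \in fib M p -> y + f \in Y.
Proof.
move=> fibY yY fib_f; move: (yY); rewrite fibY => /bigcupP [y0 y0Y /imsetP [g fib_g ->]].
suff : y0 + (g + f) \in \bigcup_(x in Y) shift x (fib M p) by rewrite -fibY addrA.
by apply/bigcupP; exists y0 => //; apply/imsetP; exists (g + f) => //; apply: fib_add.
Qed.

End Fibers.

Lemma equiv_cover_total (T : Type) (r s : T -> T -> Prop) :
  (forall x y, r x y \/ s x y) -> (forall x y, s x y -> s y x) ->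
  (forall x y z, r x y -> r y z -> r x z) -> (forall x y z, s x y -> s y z -> s x z) ->
  (forall x y, r x y) \/ (forall x y, s x y).
Proof.
move=> cover s_sym r_trans s_trans.
have [|/not_all_ex_not [x0 /not_all_ex_not [y0 not_r]]] := classic (forall x y, r x y).
  by left.
have s_x0y0 : s x0 y0 by case: (cover x0 y0) => // /not_r.
have s_x0 z : s x0 z.
  have [r_x0z | //] := cover x0 z.
  have [r_zy0 | s_zy0] := cover z y0; first by case: not_r; apply: r_trans r_x0z r_zy0.
  exact: s_trans s_x0y0 (s_sym _ _ s_zy0).
by right=> x y; apply: s_trans (s_sym _ _ (s_x0 x)) (s_x0 y).
Qed.

Section FiberParity.
Variables (M N p n : nat).
Hypotheses (p_pr : prime p) (co_pN : coprime p N) (n_gt0 : (0 < n)%N).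
Hypothesis M_def : M = (N * p ^ n)%N.
Local Notation Mp := (M %/ p)%N.
Implicit Types (X Y : {set 'Z_M}) (w : 'Z_M).

Let p_gt0 : (0 < p)%N := prime_gt0 p_pr.

Lemma Mp_def : Mp = (N * p ^ n.-1)%N.
Proof. by rewrite M_def -{1}(prednK n_gt0) expnSr mulnA mulnK. Qed.

Lemma Mp_mulp : (Mp * p)%N = M.
Proof. by rewrite Mp_def M_def -mulnA -expnSr prednK. Qed.

Lemma fiber_M_gt1 : (1 < M)%N.
Proof.
have N_gt0 : (0 < N)%N.
  by case: posnP co_pN => // ->; rewrite /coprime gcdn0 => /eqP p1; move: p_pr; rewrite p1.
have Mp_gt0 : (0 < Mp)%N by rewrite Mp_def muln_gt0 N_gt0 expn_gt0 p_gt0.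
by rewrite -Mp_mulp (leq_trans (prime_gt1 p_pr)) // leq_pmull.
Qed.

Lemma pn_dvdM : (p ^ n %| M)%N.
Proof. by rewrite M_def dvdn_mull. Qed.

Lemma dvdn_pn_mulMp s : (p ^ n %| s * Mp)%N = (p %| s)%N.
Proof.
rewrite Mp_def mulnA -{1}(prednK n_gt0) expnS dvdn_pmul2r ?expn_gt0 ?p_gt0 //.
exact: Gauss_dvdl.
Qed.

Lemma Mp_dvdM : (Mp %| M)%N.
Proof. by rewrite -{2}Mp_mulp dvdn_mulr. Qed.

Lemma natmul_eq_Mp_multiple (a x : 'Z_M) : ~~ (p ^ n %| a)%N -> (Mp %| x)%N ->
  exists s, [/\ a *+ s = x, (N %| s)%N & (p %| s.+1)%N -> (p ^ n %| (a *+ s.+1)%R)%N].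
Proof.
move=> pnNa /dvdnP [k def_x].
have a_gt0 : (0 < a)%N by rewrite lt0n; apply: contraNneq pnNa => ->; rewrite dvdn0.
have [u co_pu def_a] := pfactor_coprime p_pr a_gt0.
set e := logn p a in def_a.
have lt_en : (e < n)%N.
  by rewrite ltnNge; apply: contra pnNa => le_ne; rewrite def_a dvdn_mull // dvdn_exp2l.
have u_gt0 : (0 < u)%N by move: a_gt0; rewrite def_a muln_gt0 => /andP [].
have [ku kp def_ku _] := egcdnP p u_gt0.
rewrite [gcdn u p]gcdnC (eqP co_pu) in def_ku.
pose Q := (N * p ^ (n - e.+1))%N.
have aQ : (a * Q = u * Mp)%N.
  have e_add : (e + (n - e.+1) = n.-1)%N by lia.
  by rewrite def_a Mp_def /Q -e_add expnD; ring.
(* a Q = u M/p and u ku = 1 (mod p), so a *+ (Q k ku) = k M/p. *)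
exists (Q * (k * ku))%N; split.
- rewrite -[a]natr_Zp -[x]natr_Zp def_x -mulrnA.
  have -> : (a * (Q * (k * ku)) = k * Mp + Mp * p * (k * kp))%N.
    rewrite mulnA aQ.
    by transitivity (Mp * k * (ku * u))%N; [ring | rewrite def_ku; ring].
  by rewrite Mp_mulp natrD [X in _ + X]natrM pchar_Zp ?fiber_M_gt1 // mul0r addr0.
- by rewrite /Q -mulnA dvdn_mulr.
move=> p_s1.
have e_eq : e = n.-1.
  case: (ltnP e.+1 n) => [lt_e1n | ]; last by lia.
  have p_s : (p %| Q * (k * ku))%N.
    by rewrite dvdn_mulr // dvdn_mull // -{1}(expn1 p) dvdn_exp2l // subn_gt0.
  by move: p_s1; rewrite -addn1 dvdn_addr // dvdn1 => /eqP p1; move: p_pr; rewrite p1.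
rewrite -[a]natr_Zp -mulrnA dvdn_Zp_nat ?pn_dvdM ?fiber_M_gt1 // def_a e_eq.
rewrite -{1}(prednK n_gt0) expnSr.
have -> : (u * p ^ n.-1 * (Q * (k * ku)).+1 = p ^ n.-1 * (u * (Q * (k * ku)).+1))%N by ring.
by rewrite dvdn_pmul2l ?expn_gt0 ?p_gt0 // dvdn_mull.
Qed.

Lemma fiber_split X Y a a' b b' : tiling X Y ->
  a \in X -> a' \in X -> b \in Y -> b' \in Y ->
  (Mp %| ((a' + b') - (a + b))%R)%N ->
  (p ^ n %| (a' - a)%R)%N || (p ^ n %| (b' - b)%R)%N.
Proof.
move=> hT aX a'X bY b'Y Mp_d; apply/norP => -[pnNa pnNb].
have M_gt1 := fiber_M_gt1.
have Mp_negd : (Mp %| (- (a' + b' - (a + b)))%R)%N by rewrite dvdn_Zp_opp ?Mp_dvdM.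
have [s [def_s N_s pn_s1]] := natmul_eq_Mp_multiple pnNa Mp_negd.
have sum0 : (a' - a) *+ s.+1 + (b' - b) = 0.
  have -> : (a' - a) *+ s.+1 + (b' - b) = (a' - a) *+ s + ((a' + b') - (a + b)).
    by rewrite mulrSr -addrA; congr (_ + _); ring.
  by rewrite def_s addNr.
have [p_s1 | pNs1] := boolP (p %| s.+1)%N.
  have def_b : b' - b = - ((a' - a) *+ s.+1) by apply/eqP; rewrite -addr_eq0 addrC sum0.
  by move: pnNb; rewrite def_b dvdn_Zp_opp ?pn_dvdM // pn_s1.
have co_s1M : coprime s.+1 M.
  rewrite M_def coprimeMr (coprime_dvdr N_s (coprimeSn s)) coprime_pexpr //.
  by rewrite coprime_sym prime_coprime.
have e : a' *+ s.+1 + b' = a *+ s.+1 + b.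
  by apply/eqP; rewrite -subr_eq0 -sum0 mulrnBl; apply/eqP; ring.
move: pnNa; rewrite (tiling_scaled_eq M_gt1 hT co_s1M a'X aX b'Y bY e).
by rewrite subrr dvdn0.
Qed.

Definition fiber_pt w t : 'Z_M := w + (t * Mp)%N%:R.

Lemma fiber_pt_sub w t t' :
  fiber_pt w t' - fiber_pt w t = (t' * Mp)%N%:R - (t * Mp)%N%:R.
Proof. by rewrite /fiber_pt opprD addrACA subrr add0r. Qed.

Definition fiber_rel X Y w t t' : bool :=
  (p ^ n %| (tile_proj X Y (fiber_pt w t') - tile_proj X Y (fiber_pt w t))%R)%N.

Definition fiber_type X Y w : Prop := forall t t', fiber_rel X Y w t t'.

Lemma fiber_rel_sym X Y w t t' : fiber_rel X Y w t t' -> fiber_rel X Y w t' t.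
Proof. by rewrite /fiber_rel -dvdn_Zp_opp ?fiber_M_gt1 ?pn_dvdM // opprB. Qed.

Lemma fiber_rel_trans X Y w t1 t2 t3 :
  fiber_rel X Y w t1 t2 -> fiber_rel X Y w t2 t3 -> fiber_rel X Y w t1 t3.
Proof.
rewrite /fiber_rel => rel12 rel23.
rewrite -(subrKA (tile_proj X Y (fiber_pt w t2))) addrC.
by rewrite dvdn_Zp_addl ?fiber_M_gt1 ?pn_dvdM.
Qed.

Lemma fiber_rel_cover X Y w t t' : tiling X Y ->
  fiber_rel X Y w t t' \/ fiber_rel Y X w t t'.
Proof.
move=> hT; rewrite /fiber_rel !(tile_proj_sym _ hT).
have [aX bY] := tile_projP (fiber_pt w t) hT.
have [a'X b'Y] := tile_projP (fiber_pt w t') hT.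
apply/orP; apply: fiber_split hT aX a'X bY b'Y _.
rewrite !subrKC fiber_pt_sub dvdn_Zp_addl ?dvdn_Zp_opp ?dvdn_Zp_nat ?fiber_M_gt1 ?Mp_dvdM //.
  exact: dvdn_mull.
exact: dvdn_mull.
Qed.

Lemma dvdn_pn_fiber_diff t t' : (t < p)%N -> (t' < p)%N ->
  (p ^ n %| ((t' * Mp)%N%:R - (t * Mp)%N%:R : 'Z_M)%R)%N = (t == t').
Proof.
wlog le_tt' : t t' / (t <= t')%N => [hwlog lt_tp lt_t'p | lt_tp lt_t'p].
  have [/hwlog -> // | /ltnW /hwlog] := leqP t t'.
  by rewrite -dvdn_Zp_opp ?fiber_M_gt1 ?pn_dvdM // opprB eq_sym => ->.
rewrite -natrB ?leq_mul2r ?le_tt' ?orbT // -mulnBl dvdn_Zp_nat ?fiber_M_gt1 ?pn_dvdM //.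
rewrite dvdn_pn_mulMp /dvdn modn_small ?subn_eq0; last exact: leq_ltn_trans (leq_subr _ _) lt_t'p.
by rewrite eqn_leq le_tt'.
Qed.

Lemma fiber_rel_excl X Y w t t' : tiling X Y -> (t < p)%N -> (t' < p)%N ->
  fiber_rel X Y w t t' -> fiber_rel Y X w t t' -> t = t'.
Proof.
rewrite /fiber_rel => hT lt_tp lt_t'p relX relY; apply/eqP.
rewrite -(dvdn_pn_fiber_diff lt_tp lt_t'p) -(fiber_pt_sub w).
move: relY; rewrite !(tile_proj_sym _ hT) -(dvdn_Zp_addl fiber_M_gt1 pn_dvdM _ relX).
set u := tile_proj X Y (fiber_pt w t); set u' := tile_proj X Y (fiber_pt w t').
by rewrite (_ : u' - u + _ = fiber_pt w t' - fiber_pt w t) //; ring.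
Qed.

Lemma fiber_type_dichotomy X Y w : tiling X Y -> fiber_type X Y w \/ fiber_type Y X w.
Proof.
move=> hT; apply: equiv_cover_total => [t t' | t t' | t1 t2 t3 | t1 t2 t3].
- exact: fiber_rel_cover.
- exact: fiber_rel_sym.
- exact: fiber_rel_trans.
- exact: fiber_rel_trans.
Qed.

Lemma fiber_typeE X Y w t1 t2 : tiling X Y -> (t1 < p)%N -> (t2 < p)%N -> t1 != t2 ->
  fiber_type X Y w <-> fiber_rel X Y w t1 t2.
Proof.
move=> hT lt1 lt2 ne12; split=> [/(_ t1 t2) // | relX].
have [// | tY] := fiber_type_dichotomy w hT.
by case/eqP: ne12; apply: fiber_rel_excl hT lt1 lt2 relX (tY t1 t2).
Qed.

Lemma fiber_type_swap X Y w : tiling X Y -> fiber_type Y X w <-> ~ fiber_type X Y w.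
Proof.
move=> hT; split=> [tY tX | ]; last by case: (fiber_type_dichotomy w hT).
by have := fiber_rel_excl hT p_gt0 (prime_gt1 p_pr) (tX 0 1) (tY 0 1).
Qed.

Lemma fiber_type_shift X Y w c :
  fiber_type X Y w -> fiber_type X Y (w + (c * Mp)%N%:R).
Proof.
have pt_shift t : fiber_pt (w + (c * Mp)%N%:R) t = fiber_pt w (c + t).
  by rewrite /fiber_pt mulnDl natrD addrA.
by move=> tX t t'; rewrite /fiber_rel !pt_shift; apply: tX.
Qed.

Lemma mem_fiber w (x y : 'Z_M) : x + y \in shift w (fib M p) ->
  exists2 t, (t < p)%N & x + y = fiber_pt w t.
Proof. by case/imsetP => f /fibP [t lt_tp ->] ->; exists t. Qed.

Lemma splits_parity_of_fiber_type X Y w : tiling X Y -> fiber_type X Y w ->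
  splits_parity X Y (shift w (fib M p)) p n.
Proof.
move=> hT tX; have M_gt1 := fiber_M_gt1.
have pn1_dvdM : (p ^ n.-1 %| M)%N by rewrite M_def dvdn_mull // dvdn_exp2l // leq_pred.
split=> [x x' | y y'].
  move=> /setIdP [xX /existsP [y /andP [yY /mem_fiber [t _ pt_t]]]].
  move=> /setIdP [x'X /existsP [y' /andP [y'Y /mem_fiber [t' _ pt_t']]]].
  by rewrite -(tile_proj_addr hT xX yY) -(tile_proj_addr hT x'X y'Y) pt_t pt_t'; apply: tX.
move=> /setIdP [yY /existsP [x /andP [xX]]]; rewrite addrC => /mem_fiber [t lt_tp pt_t].
move=> /setIdP [y'Y /existsP [x' /andP [x'X]]]; rewrite addrC => /mem_fiber [t' lt_t'p pt_t'].
move=> ne_yy'.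
have def_x : x = tile_proj X Y (fiber_pt w t) by rewrite -pt_t tile_proj_addr.
have def_x' : x' = tile_proj X Y (fiber_pt w t') by rewrite -pt_t' tile_proj_addr.
have pn_x : (p ^ n %| (x - x')%R)%N by rewrite def_x def_x'; apply: tX.
have def_y : y - y' = (fiber_pt w t - fiber_pt w t') - (x - x').
  by rewrite -pt_t -pt_t'; ring.
rewrite def_y fiber_pt_sub; split.
  have pn1_Mp s : (p ^ n.-1 %| ((s * Mp)%N%:R : 'Z_M))%N.
    by rewrite dvdn_Zp_nat // Mp_def !dvdn_mull.
  have pn1_x : (p ^ n.-1 %| (x - x')%R)%N.
    by apply: dvdn_trans pn_x; rewrite dvdn_exp2l // leq_pred.
  by rewrite !dvdn_Zp_addl ?dvdn_Zp_opp ?pn1_Mp.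
apply/negP => pn_d; case/negP: ne_yy'.
have := dvdn_Zp_addl M_gt1 pn_dvdM (x - x') pn_d.
rewrite subrK pn_x (dvdn_pn_fiber_diff lt_t'p lt_tp) => /eqP tt'.
have -> : y = fiber_pt w t - x by rewrite -pt_t addrC addKr.
have -> : y' = fiber_pt w t' - x' by rewrite -pt_t' addrC addKr.
by rewrite def_x def_x' tt'.
Qed.

End FiberParity.

Section GridFiberTypes.
Variables (pi pj pk ni nj nk M : nat).
Hypotheses (hpi : prime pi) (hpj : prime pj) (hpk : prime pk).
Hypotheses (hij : pi != pj) (hik : pi != pk) (hjk : pj != pk).
Hypotheses (hni : (0 < ni)%N) (hnj : (0 < nj)%N) (hnk : (0 < nk)%N).
Hypothesis hM : M = (pi ^ ni * pj ^ nj * pk ^ nk)%N.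

Let D := (M %/ (pi * pj * pk))%N.
Let Mi := (M %/ pi)%N.
Let Mj := (M %/ pj)%N.
Let Mk := (M %/ pk)%N.

Lemma coprime_pk_ij : coprime pk (pi ^ ni * pj ^ nj).
Proof.
by rewrite coprimeMr !coprime_pexpr // !prime_coprime // !dvdn_prime2 // eq_sym hik eq_sym.
Qed.

Let M_gt1 : (1 < M)%N := fiber_M_gt1 hpk coprime_pk_ij hnk hM.

Lemma M_eqD : M = (D * (pi * pj * pk))%N.
Proof.
have p_dvd_pn p m : prime p -> (0 < m)%N -> (p %| p ^ m)%N.
  by move=> p_pr m_gt0; rewrite -{1}(expn1 p) dvdn_exp2l.
by rewrite /D divnK // hM !dvdn_mul ?p_dvd_pn.
Qed.

Lemma pof_gt0 d : (0 < pof pi pj pk d)%N.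
Proof. by case: d; apply: prime_gt0. Qed.

Lemma pof_dvdM d : (pof pi pj pk d %| M)%N.
Proof.
rewrite M_eqD; case: d => /=; apply: dvdn_mull.
- by rewrite -mulnA dvdn_mulr.
- by rewrite dvdn_mulr // dvdn_mull.
- exact: dvdn_mull.
Qed.

Lemma gcd_MiMjMk : gcdn (gcdn Mi Mj) Mk = D.
Proof.
have divE p q r : prime p -> (D * (q * r) * p = D * (pi * pj * pk))%N ->
    (D * (pi * pj * pk) %/ p = D * (q * r))%N.
  by move=> p_pr <-; rewrite mulnK ?prime_gt0.
rewrite /Mi /Mj /Mk M_eqD (divE pi pj pk) ?(divE pj pi pk) ?(divE pk pi pj) //; try ring.
have co_ji : coprime pj pi by rewrite prime_coprime // dvdn_prime2 // eq_sym.
have co_kij : coprime pk (pi * pj).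
  by rewrite coprimeMr !prime_coprime // !dvdn_prime2 // eq_sym hik eq_sym.
by rewrite -!muln_gcdr -muln_gcdl (eqP co_ji) mul1n (eqP co_kij) muln1.
Qed.

Variable z0 : 'Z_M.

Let plane (t : nat) := sumset (shift (z0 + (t * Mk)%N%:R) (fib M pi)) (fib M pj).

Definition plane_pt ci cj : 'Z_M := z0 + (ci * Mi)%N%:R + (cj * Mj)%N%:R.

Lemma grid_decomp z : z \in grid z0 D ->
  exists ci cj ck, z = plane_pt ci cj + (ck * Mk)%N%:R.
Proof.
rewrite inE => /dvdnP [q def_q].
have Mi_gt0 : (0 < Mi)%N.
  by rewrite /Mi divn_gt0 ?prime_gt0 // dvdn_leq ?(ltnW M_gt1) // (pof_dvdM Di).
have [a [b def_g]] := Zp_nat_gcdn M_gt1 Mj Mi_gt0.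
have g_gt0 : (0 < gcdn Mi Mj)%N by rewrite gcdn_gt0 Mi_gt0.
have [c [d def_D]] := Zp_nat_gcdn M_gt1 Mk g_gt0.
rewrite gcd_MiMjMk in def_D.
exists (q * M.-1 * c * a)%N, (q * M.-1 * c * b)%N, (q * M.-1 * d)%N.
have -> : z = z0 + (q * M.-1)%N%:R * D%:R.
  by rewrite -natrM mulnAC -Zp_natN // -def_q natr_Zp opprB subrKC.
by rewrite /plane_pt def_D !(natrD, natrM) def_g !(natrD, natrM); ring.
Qed.

Variables (A B : {set 'Z_M}) (kappa : 'Z_M -> dir) (lam : 'I_pk -> dir).
Hypothesis hAB : tiling A B.
Hypothesis hkappa_fib : forall a, a \in A ->
  fibered (A :&: grid a (M %/ (pi * pj * pk))) (pof pi pj pk (kappa a)).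
Hypothesis hlam : forall (nu : 'I_pk) a,
  a \in Sigma A B (sumset (shift (z0 + (nu * (M %/ pk))%N%:R) (fib M pi)) (fib M pj)) ->
  kappa a = lam nu.
Hypothesis hcount : forall l : dir, l != Dk -> (2 <= #|[set nu : 'I_pk | lam nu == l]|)%N.

Lemma fiber_pt_plane ci cj t : fiber_pt pk (plane_pt ci cj) t \in plane t.
Proof.
apply/imset2P; exists (z0 + (t * Mk)%N%:R + (ci * Mi)%N%:R) (cj * Mj)%N%:R.
- by apply/imsetP; exists (ci * Mi)%N%:R => //; apply: (fib_natmul M_gt1 (pof_gt0 Di) (pof_dvdM Di)).
- exact: (fib_natmul M_gt1 (pof_gt0 Dj) (pof_dvdM Dj)).
by rewrite /fiber_pt /plane_pt; ring.
Qed.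

Lemma tile_proj_plane_shift d ci cj c (nu : 'I_pk) : lam nu = d ->
  let e := (c * (M %/ pof pi pj pk d))%N%:R in
  tile_proj A B (fiber_pt pk (plane_pt ci cj + e) nu) =
  tile_proj A B (fiber_pt pk (plane_pt ci cj) nu) + e.
Proof.
move=> lam_nu e; set x := fiber_pt pk (plane_pt ci cj) nu.
have [aA bB] := tile_projP x hAB; set a := tile_proj A B x in aA bB *.
have a_plane : a \in Sigma A B (plane nu).
  by rewrite inE aA; apply/existsP; exists (x - a); rewrite bB subrKC fiber_pt_plane.
have fib_a := hkappa_fib aA; rewrite (hlam a_plane) lam_nu in fib_a.
have a_grid : a \in A :&: grid a D by rewrite !inE aA subrr dvdn0.
have ae_A : a + e \in A.
  have e_fib : e \in fib M (pof pi pj pk d) := fib_natmul M_gt1 (pof_gt0 d) (pof_dvdM d) c.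
  by have := fibered_add M_gt1 (pof_gt0 d) (pof_dvdM d) fib_a a_grid e_fib; rewrite inE => /andP [].
by rewrite -(tile_proj_shift hAB ae_A) /x /fiber_pt addrAC.
Qed.

Lemma fiber_type_plane_shift d ci cj c : d != Dk ->
  fiber_type pk nk A B (plane_pt ci cj + (c * (M %/ pof pi pj pk d))%N%:R) <->
  fiber_type pk nk A B (plane_pt ci cj).
Proof.
move=> dNk; have /card_gt1P [nu1 [nu2 [nu1d nu2d ne12]]] := hcount dNk.
rewrite !inE in nu1d nu2d.
have typeE w := fiber_typeE hpk coprime_pk_ij hnk hM w hAB (ltn_ord nu1) (ltn_ord nu2) ne12.
have rel_shift : fiber_rel pk nk A B (plane_pt ci cj + (c * (M %/ pof pi pj pk d))%N%:R) nu1 nu2 =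
    fiber_rel pk nk A B (plane_pt ci cj) nu1 nu2.
  rewrite /fiber_rel !(tile_proj_plane_shift _ _ _ (eqP nu1d)) (tile_proj_plane_shift _ _ _ (eqP nu2d)).
  by rewrite opprD addrACA subrr addr0.
by split=> /typeE rel; apply/typeE; rewrite ?rel_shift // -rel_shift.
Qed.

Lemma fiber_type_plane ci cj :
  fiber_type pk nk A B (plane_pt ci cj) <-> fiber_type pk nk A B z0.
Proof.
have shift_j := fiber_type_plane_shift (d:=Dj) ci 0 cj isT.
have shift_i := fiber_type_plane_shift (d:=Di) 0 0 ci isT.
rewrite /plane_pt !mul0n !mulr0n !addr0 in shift_i shift_j.
exact: iff_trans shift_j shift_i.
Qed.

Lemma grid_fiber_types :
  (forall z, z \in grid z0 D -> fiber_type pk nk A B z) \/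
  (forall z, z \in grid z0 D -> fiber_type pk nk B A z).
Proof.
have [tA | tB] := fiber_type_dichotomy hpk coprime_pk_ij hnk hM z0 hAB;
  [left | right] => z /grid_decomp [ci [cj [ck ->]]]; apply: fiber_type_shift.
  exact/fiber_type_plane.
apply/(fiber_type_swap hpk coprime_pk_ij hnk hM _ hAB) => /fiber_type_plane.
exact: (fiber_type_swap hpk coprime_pk_ij hnk hM z0 hAB).1 tB.
Qed.

End GridFiberTypes.

Unset Implicit Arguments.

Theorem lemma7p6
  (pi pj pk ni nj nk M : nat)
  (hpi : prime pi) (hpj : prime pj) (hpk : prime pk)
  (hij : pi != pj) (hik : pi != pk) (hjk : pj != pk)
  (hni : (0 < ni)%N) (hnj : (0 < nj)%N) (hnk : (0 < nk)%N)
  (hM : M = (pi ^ ni * pj ^ nj * pk ^ nk)%N)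
  (A B : {set 'Z_M})
  (hAB : tiling A B)
  (hPhi : 'Phi_M %| maskpoly A)
  (hfib : forall a, a \in A -> exists nu : dir,
      fibered (A :&: grid a (M %/ (pi * pj * pk))) (pof pi pj pk nu))
  (kappa : 'Z_M -> dir)
  (hkappa_grid : forall a a', a \in A -> a' \in A ->
      a' \in grid a (M %/ (pi * pj * pk)) -> kappa a = kappa a')
  (hkappa_fib : forall a, a \in A ->
      fibered (A :&: grid a (M %/ (pi * pj * pk))) (pof pi pj pk (kappa a)))
  (z0 : 'Z_M)
  (hkLam : forall a, a \in Sigma A B (grid z0 (M %/ (pi * pj * pk))) -> kappa a != Dk)
  (lam : 'I_pk -> dir)
  (hlam_ij : forall nu, lam nu != Dk)
  (hlam : forall (nu : 'I_pk) a,
      a \in Sigma A B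
              (sumset (shift (z0 + ((nat_of_ord nu) * (M %/ pk))%N%:R) (fib M pi))
                      (fib M pj)) ->
      kappa a = lam nu)
  (hcount : forall l : dir, l != Dk -> (2 <= #|[set nu : 'I_pk | lam nu == l]|)%N) :
  (forall z, z \in grid z0 (M %/ (pi * pj * pk)) ->
      splits_parity A B (shift z (fib M pk)) pk nk) \/
  (forall z, z \in grid z0 (M %/ (pi * pj * pk)) ->
      splits_parity B A (shift z (fib M pk)) pk nk).
Proof.
have co_pk := coprime_pk_ij hpi hpj hpk hik hjk hni hnj.
have [tA | tB] :=
  grid_fiber_types hpi hpj hpk hij hik hjk hni hnj hnk hM hAB hkappa_fib hlam hcount.
- by left=> z /tA /(splits_parity_of_fiber_type hpk co_pk hnk hM hAB).
- by right=> z /tB /(splits_parity_of_fiber_type hpk co_pk hnk hM (tiling_sym hAB)).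
Qed.
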